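(* Let $n$ be a positive integer and let $k, c$ be complex numbers. Then \[ \sum_{\pi\in\mathcal{D}(n)} (-1)^{\#(\pi)-1} \sum_{j=1}^{s(\pi)} j^k c^j = \sum_{\substack{\pi\in\mathcal{P}(n)\\ \nu_d(\pi)\ge 2}} \sum_{j=0}^{\nu_d(\pi)-1} (-1)^j \binom{\nu_d(\pi)-1}{j} \bigl(\ell(\pi)-j\bigr)^k c^{\ell(\pi)-j} + \sigma_{k,c}(n), \] where $\sigma_{k,c}(n) = \sum_{d\mid n} d^k c^d$.
   Context: $\mathcal{P}(n)$ is the set of all partitions of $n$ and $\mathcal{D}(n)$ the set of partitions of $n$ into distinct parts. For a partition $\pi$: $s(\pi)$ is its smallest part, $\ell(\pi)$ its largest part, $\#(\pi)$ its number of parts, and $\nu_d(\pi)$ the number of distinct part sizes of $\pi$. For a positive integer $m$ and complex $k$, $m^k=e^{k\log m}$ with the real logarithm. *)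

From HB Require Import structures.
From mathcomp Require Import all_boot all_order all_algebra.
From mathcomp Require Import all_classical all_reals all_analysis.
From mathcomp Require Import complex.
Set Implicit Arguments. Unset Strict Implicit. Unset Printing Implicit Defensive.
Import Order.TTheory GRing.Theory Num.Theory.
Local Open Scope ring_scope.

(* m ^ k = exp (k log m) for a positive integer m and complex k, written out:
   exp((a + i b) t) = exp(a t) (cos (b t) + i sin (b t)) with t = ln m (real). *)
Definition cpow (R : realType) (m : nat) (k : R[i]) : R[i] :=
  let t := ln (m%:R : R) in
  @Complex R (expR (@complex.Re R k * t) * cos (@complex.Im R k * t)) (expR (@complex.Re R k * t) * sin (@complex.Im R k * t)).

(* A partition of n is encoded by its multiplicity function:
   mu i = number of parts equal to i (for 1 <= i <= n); mu 0 = 0.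
   Multiplicities are at most n, so mu : {ffun 'I_n.+1 -> 'I_n.+1}. *)
Definition mult_fun (n : nat) := {ffun 'I_n.+1 -> 'I_n.+1}.

Definition is_partition (n : nat) (mu : mult_fun n) : bool :=
  (nat_of_ord (mu ord0) == 0%N) && (\sum_(i < n.+1) (i * mu i)%N == n)%N.

Definition is_distinct_partition (n : nat) (mu : mult_fun n) : bool :=
  is_partition mu && [forall i, (nat_of_ord (mu i) <= 1)%N].

Definition nparts (n : nat) (mu : mult_fun n) : nat := (\sum_(i < n.+1) mu i)%N.
Definition ndistinct (n : nat) (mu : mult_fun n) : nat := #|[pred i | (0 < mu i)%N]|.
Definition spart (n : nat) (mu : mult_fun n) : nat :=
  \big[minn/n]_(i < n.+1 | (0 < mu i)%N) (nat_of_ord i).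
Definition lpart (n : nat) (mu : mult_fun n) : nat :=
  (\max_(i < n.+1 | (0 < mu i)%N) (nat_of_ord i))%N.

Definition sigma_kc (R : realType) (k c : R[i]) (n : nat) : R[i] :=
  \sum_(1 <= d < n.+1 | (d %| n)%N) cpow d k * c ^+ d.

(* Write F m = f 1 + ... + f m.  Grouping distinct partitions by their smallest part, the
   left side is a combination of F 1, ..., F n with coefficients D m, the signed number of
   partitions of n into distinct parts with smallest part m.  On the right side Pascal's rule
   turns each inner sum into sum_j (-1)^j C(nu, j) F(l - j), and the divisor sum is exactly the
   same expression for the partitions with a single part size; so the right side is a
   combination of the F m with coefficients E m = sum_pi (-1)^(l - m) C(nu, l - m).  Hence it
   suffices to show E m = D m, which is a q-series identity: D m is the coefficient of q^n in
   q^m prod_(m < i <= n) (1 - q^i), and grouping partitions by their largest part r,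
   prod_(i <= r) (1 + (1 + y) q^i / (1 - q^i)) = prod_(i <= r) (1 + y q^i) / (q; q)_r counts them
   by number of part sizes; the q-binomial theorem then evaluates the alternating sum over r.
   All series are polynomials compared modulo q^(n + 1). *)

From HB Require Import structures.
From mathcomp Require Import all_boot all_order all_algebra.
From mathcomp Require Import all_classical all_reals all_analysis.
From mathcomp Require Import complex.
From mathcomp Require Import ring zify.
From Stdlib Require Import Lia.
Set Implicit Arguments. Unset Strict Implicit. Unset Printing Implicit Defensive.
Import Order.TTheory GRing.Theory Num.Theory.
Local Open Scope ring_scope.

(** * Congruences modulo an element *)

Section Eqmod.
Variable R : comNzRingType.

Definition eqmod (k a b : R) := exists c, a - b = k * c.

Lemma eqmod_refl k a : eqmod k a a.
Proof. by exists 0; rewrite subrr mulr0. Qed.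

Lemma eqmod_sym k a b : eqmod k a b -> eqmod k b a.
Proof. by case=> c h; exists (- c); rewrite mulrN -h opprB. Qed.

Lemma eqmod_trans k b a d : eqmod k a b -> eqmod k b d -> eqmod k a d.
Proof. by case=> c1 h1 [c2 h2]; exists (c1 + c2); rewrite mulrDr -h1 -h2 addrA subrK. Qed.

Lemma eqmodD k a b c d : eqmod k a b -> eqmod k c d -> eqmod k (a + c) (b + d).
Proof. by case=> x h1 [y h2]; exists (x + y); rewrite mulrDr -h1 -h2; ring. Qed.

Lemma eqmodB k a b c d : eqmod k a b -> eqmod k c d -> eqmod k (a - c) (b - d).
Proof. by case=> x h1 [y h2]; exists (x - y); rewrite mulrBr -h1 -h2; ring. Qed.

Lemma eqmodM k a b c d : eqmod k a b -> eqmod k c d -> eqmod k (a * c) (b * d).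
Proof.
case=> x h1 [y h2]; exists (x * c + b * y).
have -> : a * c - b * d = (a - b) * c + b * (c - d) by ring.
by rewrite h1 h2; ring.
Qed.

Lemma eqmodMl k a b c : eqmod k a b -> eqmod k (c * a) (c * b).
Proof. exact/eqmodM/eqmod_refl. Qed.

Lemma eqmodMr k a b c : eqmod k a b -> eqmod k (a * c) (b * c).
Proof. by move=> h; apply: eqmodM h (eqmod_refl _ _). Qed.

Lemma eqmod_mul1l k x y : eqmod k x 1 -> eqmod k (x * y) y.
Proof. by move=> h; rewrite -{2}[y]mul1r; apply: eqmodMr. Qed.

Lemma eqmod_mul1r k x y : eqmod k x 1 -> eqmod k (y * x) y.
Proof. by rewrite mulrC; apply: eqmod_mul1l. Qed.

Lemma eqmod_sum k (I : Type) (r : seq I) (P : pred I) (F1 F2 : I -> R) :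
  (forall i, P i -> eqmod k (F1 i) (F2 i)) ->
  eqmod k (\sum_(i <- r | P i) F1 i) (\sum_(i <- r | P i) F2 i).
Proof. by move=> h; apply: (big_ind2 (eqmod k)) => //; [apply: eqmod_refl|apply: eqmodD]. Qed.

Lemma eqmod_prod k (I : Type) (r : seq I) (P : pred I) (F1 F2 : I -> R) :
  (forall i, P i -> eqmod k (F1 i) (F2 i)) ->
  eqmod k (\prod_(i <- r | P i) F1 i) (\prod_(i <- r | P i) F2 i).
Proof. by move=> h; apply: (big_ind2 (eqmod k)) => //; [apply: eqmod_refl|apply: eqmodM]. Qed.

End Eqmod.

Lemma eqmod_coef (R : comNzRingType) (k : R) (p q : {poly R}) j :
  eqmod k%:P p q -> eqmod k p`_j q`_j.
Proof. by case=> c h; exists c`_j; rewrite -coefB h coefCM. Qed.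

Lemma eqmod_Xn_coef (R : comNzRingType) n (p q : {poly R}) :
  eqmod 'X^(n.+1) p q -> p`_n = q`_n.
Proof. by case=> c h; apply/eqP; rewrite -subr_eq0 -coefB h coefXnM ltnSn. Qed.

Lemma eqmod_Xn_mul (R : comNzRingType) n e (c : {poly R}) :
  (n < e)%N -> eqmod 'X^(n.+1) ('X^e * c) 0.
Proof. by move=> h; exists ('X^(e - n.+1) * c); rewrite subr0 mulrA -exprD subnKC. Qed.

Lemma eqmod_mulK (R : comNzRingType) (k u v a b : R) :
  eqmod k (u * v) 1 -> eqmod k (a * u) b -> eqmod k a (b * v).
Proof.
move=> uv au; apply: (eqmod_trans (b := a * u * v)); last exact: eqmodMr.
by rewrite -mulrA; apply: eqmod_sym; apply: eqmod_mul1r.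
Qed.

Lemma eqmod_XnM (R : comNzRingType) n a e (p q : {poly R}) :
  (n < e + a)%N -> eqmod 'X^a p q -> eqmod 'X^(n.+1) ('X^e * p) ('X^e * q).
Proof.
move=> h [c pq]; exists ('X^(e + a - n.+1) * c).
by rewrite -mulrBr pq mulrA -exprD mulrA -exprD subnKC.
Qed.

Lemma eqmod_prod_subX (R : comNzRingType) a b :
  eqmod ('X^a : {poly R}) (\prod_(a <= i < b) (1 - 'X^i)) 1.
Proof.
apply: (@eqmod_trans {poly R} _ (\prod_(a <= i < b) 1)); last first.
  by rewrite big1_eq; exact: eqmod_refl.
rewrite big_nat_cond [X in eqmod _ _ X]big_nat_cond.
apply: eqmod_prod => i /andP [/andP [ai _] _]; exists (- 'X^(i - a)).
by rewrite mulrN -exprD subnKC // addrAC subrr add0r.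
Qed.

(** * Truncated q-series *)

Definition qpoch (r : nat) : {poly int} := \prod_(1 <= i < r.+1) (1 - 'X^i).

Lemma qpoch0 : qpoch 0 = 1. Proof. by rewrite /qpoch big_geq. Qed.

Lemma qpochS r : qpoch r.+1 = qpoch r * (1 - 'X^(r.+1)).
Proof. by rewrite /qpoch big_nat_recr. Qed.

Lemma qpoch_cat a b : (a <= b)%N ->
  qpoch b = qpoch a * \prod_(a.+1 <= i < b.+1) (1 - 'X^i).
Proof. by move=> ab; rewrite /qpoch -big_cat_nat. Qed.

Definition tri (j : nat) : nat := 'C(j.+1, 2).

Lemma triS j : tri j.+1 = (tri j + j.+1)%N.
Proof. by rewrite /tri binS bin1 addnC. Qed.

Lemma leq_tri j : (j <= tri j)%N.
Proof. by elim: j => // j ih; rewrite triS; lia. Qed.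

(* [esymq r j] is the elementary symmetric polynomial e_j(q, q^2, ..., q^r). *)
Fixpoint esymq (r j : nat) : {poly int} :=
  match r with
  | 0 => (j == 0)%:R
  | r'.+1 => esymq r' j + (if j is j'.+1 then 'X^(r'.+1) * esymq r' j' else 0)
  end.

Lemma esymq0 r : esymq r 0 = 1.
Proof. by elim: r => //= r ->; rewrite addr0. Qed.

Lemma esymq_gt r j : (r < j)%N -> esymq r j = 0.
Proof. by elim: r j => [|r ih] [|j] //= h; rewrite !ih ?mulr0 ?addr0 //; lia. Qed.

Lemma esymqSS r j : esymq r.+1 j.+1 = esymq r j.+1 + 'X^(r.+1) * esymq r j.
Proof. by []. Qed.

(* q-binomial theorem: esymq (j + d) j = q^(tri j) [j + d, j]_q. *)
Lemma qpochM_esymq j d :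
  qpoch j * qpoch d * esymq (j + d) j = 'X^(tri j) * qpoch (j + d).
Proof.
elim: j d => [|j ihj] d; first by rewrite qpoch0 esymq0 !mul1r mulr1.
elim: d => [|d ihd].
  have := ihj 0%N; rewrite qpoch0 !mulr1 !addn0 => h.
  rewrite esymqSS esymq_gt // add0r qpochS triS exprD.
  transitivity ((qpoch j * esymq j j) * ((1 - 'X^(j.+1)) * 'X^(j.+1))); first by ring.
  by rewrite h; ring.
have {}ihj := ihj d.+1; rewrite -addSnnS in ihj.
rewrite addnS esymqSS (qpochS j) (qpochS d) (qpochS (j.+1 + d)) triS exprD.
rewrite (qpochS d) in ihj; rewrite (qpochS j) triS exprD in ihd.
have -> : 'X^((j.+1 + d).+1) = 'X^(d.+1) * 'X^(j.+1) :> {poly int}.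
  by rewrite -exprD; congr ('X^ _); lia.
set a : {poly int} := 'X^(d.+1) in ihj *; set b : {poly int} := 'X^(j.+1) in ihd *.
transitivity ((1 - a) * (qpoch j * (1 - b) * qpoch d * esymq (j.+1 + d) j.+1)
    + a * b * (1 - b) * (qpoch j * (qpoch d * (1 - a)) * esymq (j.+1 + d) j)); first by ring.
rewrite ihd ihj; ring.
Qed.

Lemma sum_esymq_alt r : \sum_(j < r.+1) (-1) ^+ j * esymq r j = qpoch r.
Proof.
elim: r => [|r ih]; first by rewrite big_ord_recl big_ord0 /= qpoch0 addr0 mulr1.
have -> : \sum_(j < r.+2) (-1) ^+ j * esymq r.+1 j =
    \sum_(j < r.+2) (-1) ^+ j * esymq r j
    + \sum_(j < r.+2) (-1) ^+ j * (if j : nat is j'.+1 then 'X^(r.+1) * esymq r j' else 0).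
  by rewrite -big_split; apply: eq_bigr => j _; rewrite /= mulrDr.
rewrite big_ord_recr /= ih esymq_gt // mulr0 addr0 big_ord_recl /= mulr0 add0r.
rewrite qpochS -ih mulrBr mulr1 big_distrl /= -sumrN.
by congr (_ + _); apply: eq_bigr => j _; rewrite /bump /= add1n add0n exprS; ring.
Qed.

Section TruncatedSeries.
Variable n : nat.
Local Notation eqmodq := (@eqmod {poly int} 'X^(n.+1)).

(* [1 + qgeom i] is 1 / (1 - q^i) truncated at degree n. *)
Definition qgeom (i : nat) : {poly int} := \sum_(1 <= t < n.+1) 'X^(i * t).

Definition qpoch_inv (r : nat) : {poly int} := \prod_(1 <= i < r.+1) (1 + qgeom i).

Lemma qpoch_invS r : qpoch_inv r.+1 = qpoch_inv r * (1 + qgeom r.+1).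
Proof. by rewrite /qpoch_inv big_nat_recr. Qed.

Lemma qgeom_mul i : (1 - 'X^i) * (1 + qgeom i) = 1 - 'X^(i * n.+1).
Proof.
have -> : 1 + qgeom i = \sum_(t < n.+1) ('X^i) ^+ t.
  rewrite big_ord_recl /qgeom big_add1 big_mkord; congr (_ + _).
  by apply: eq_bigr => t _; rewrite exprM.
by rewrite exprM -[RHS]opprB subrX1 -mulNr opprB.
Qed.

Lemma eqmod_Xpow0 i : (0 < i)%N -> eqmodq 'X^(i * n.+1) 0.
Proof. by move=> i_gt0; rewrite -[X in eqmodq X]mulr1; apply: eqmod_Xn_mul; nia. Qed.

Lemma qgeomK i : (0 < i)%N -> eqmodq ((1 - 'X^i) * (1 + qgeom i)) 1.
Proof.
move=> i_gt0; rewrite qgeom_mul -[X in eqmodq _ X]subr0.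
exact: eqmodB (eqmod_refl _ _) (eqmod_Xpow0 i_gt0).
Qed.

Lemma qgeom_mulX i : (0 < i)%N -> eqmodq ('X^i * (1 + qgeom i)) (qgeom i).
Proof.
move=> i_gt0; have -> : 'X^i * (1 + qgeom i) = qgeom i + (1 - (1 - 'X^i) * (1 + qgeom i)) by ring.
rewrite qgeom_mul subKr -[X in eqmodq _ X]addr0.
exact: eqmodD (eqmod_refl _ _) (eqmod_Xpow0 i_gt0).
Qed.

Lemma qpochK r : eqmodq (qpoch r * qpoch_inv r) 1.
Proof.
rewrite /qpoch /qpoch_inv -big_split /=.
apply: (@eqmod_trans {poly int} _ (\prod_(1 <= i < r.+1) 1)); last first.
  by rewrite big1_eq; exact: eqmod_refl.
rewrite big_nat_cond [X in eqmodq _ X]big_nat_cond; apply: eqmod_prod => i /andP [/andP [i_gt0 _] _].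
exact: qgeomK.
Qed.

Lemma qpoch_invK r : eqmodq (qpoch_inv r * qpoch r) 1.
Proof. by rewrite mulrC; apply: qpochK. Qed.
End TruncatedSeries.

Section TruncatedIdentities.
Variable n : nat.
Local Notation eqmodq := (@eqmod {poly int} 'X^(n.+1)).
Local Notation qpoch_inv := (qpoch_inv n).
Local Notation qgeom := (qgeom n).

Lemma qpochMK a b : eqmodq (qpoch a * qpoch b * (qpoch_inv a * qpoch_inv b)) 1.
Proof.
rewrite mulrACA -[X in eqmodq _ X]mulr1.
exact: eqmodM (qpochK n a) (qpochK n b).
Qed.

Lemma qpoch_inv_esymq r j : (j <= r)%N ->
  eqmodq (qpoch_inv r * esymq r j) ('X^(tri j) * qpoch_inv j * qpoch_inv (r - j)).
Proof.
move=> jr; rewrite -mulrA; apply: eqmod_mulK (qpochMK j (r - j)) _.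
have := qpochM_esymq j (r - j); rewrite subnKC // => e.
have -> : qpoch_inv r * esymq r j * (qpoch j * qpoch (r - j))
    = qpoch_inv r * (qpoch j * qpoch (r - j) * esymq r j) by ring.
rewrite e mulrCA -[X in eqmodq _ X]mulr1.
exact/eqmodMl/qpoch_invK.
Qed.

Lemma esymq_trunc j : (j <= n)%N -> eqmodq (esymq n j) ('X^(tri j) * qpoch_inv j).
Proof.
move=> jn; apply: (eqmod_trans (b := qpoch_inv n * esymq n j * qpoch n)).
  by rewrite mulrAC; apply: eqmod_sym; apply: eqmod_mul1l; apply: qpoch_invK.
apply: (eqmod_trans (eqmodMr _ (qpoch_inv_esymq jn))).
pose P : {poly int} := \prod_((n - j).+1 <= i < n.+1) (1 - 'X^i).
have -> : 'X^(tri j) * qpoch_inv j * qpoch_inv (n - j) * qpoch n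
    = 'X^(tri j) * (qpoch_inv j * P) * (qpoch_inv (n - j) * qpoch (n - j)).
  by rewrite (qpoch_cat (leq_subr j n)) -/P; ring.
rewrite -[X in eqmodq _ X]mulr1; apply: eqmodM; last exact: qpoch_invK.
rewrite -[X in eqmodq _ ('X^_ * X)]mulr1.
apply: eqmod_XnM (eqmodMl _ (eqmod_prod_subX _ _ _)).
by have := leq_tri j; lia.
Qed.

Lemma sum_tri_qpoch_inv :
  eqmodq (\sum_(j < n.+1) (-1) ^+ j * ('X^(tri j) * qpoch_inv j)) (qpoch n).
Proof.
rewrite -sum_esymq_alt; apply: eqmod_sum => j _; apply: eqmodMl.
by apply: eqmod_sym; apply: esymq_trunc; rewrite -ltnS.
Qed.

Lemma qpoch_inv_esymq_diff r m : (1 <= m <= r)%N ->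
  eqmodq (qpoch_inv r * esymq r (r - m) - qpoch_inv r.-1 * esymq r.-1 (r - m))
         ('X^(tri (r - m)) * qpoch_inv (r - m) * ('X^m * qpoch_inv m)).
Proof.
case: m => // m /andP [_ mr]; case: r mr => // r mr.
have e1 := qpoch_inv_esymq (leq_subr m.+1 r.+1).
have e2 := qpoch_inv_esymq (leq_subr m r); rewrite subSS in e1 e2 *.
rewrite (_ : r.+1 - (r - m) = m.+1)%N in e1; last by lia.
rewrite subKn in e2; last by lia.
apply: (eqmod_trans (eqmodB e1 e2)); rewrite qpoch_invS.
set c := 'X^(tri (r - m)) * qpoch_inv (r - m) * qpoch_inv m.
rewrite (_ : _ - _ = c * qgeom m.+1); last by rewrite /c; ring.
rewrite [X in eqmodq _ X](_ : _ = c * ('X^(m.+1) * (1 + qgeom m.+1))); last by rewrite /c; ring.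
by apply/eqmodMl/eqmod_sym/qgeom_mulX.
Qed.

Lemma sum_tri_qpoch_inv_mulX m : (m <= n)%N ->
  eqmodq ((\sum_(0 <= j < n.+1 - m) (-1) ^+ j * ('X^(tri j) * qpoch_inv j)) * 'X^m)
         (qpoch n * 'X^m).
Proof.
move=> mn; set g := fun j => (-1) ^+ j * ('X^(tri j) * qpoch_inv j).
have tail : eqmodq ((\sum_(n.+1 - m <= j < n.+1) g j) * 'X^m) 0.
  rewrite big_distrl /=; apply: (@eqmod_trans {poly int} _ (\sum_(n.+1 - m <= j < n.+1) 0)).
    rewrite big_nat_cond [X in eqmodq _ X]big_nat_cond.
    apply: eqmod_sum => j /andP [/andP [jm _] _].
    rewrite (_ : _ * _ = 'X^(tri j + m) * ((-1) ^+ j * qpoch_inv j)); last by rewrite /g exprD; ring.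
    apply: eqmod_Xn_mul.
    by have := leq_tri j; lia.
  by rewrite big1_eq; exact: eqmod_refl.
apply: (eqmod_trans (b := (\sum_(0 <= j < n.+1) g j) * 'X^m)); last first.
  by apply: eqmodMr; rewrite big_mkord; apply: sum_tri_qpoch_inv.
rewrite [in X in eqmodq _ X](big_cat_nat _ (n := n.+1 - m)) ?leq_subr //= mulrDl.
by rewrite -[X in eqmodq X _]addr0; apply: eqmodD (eqmod_refl _ _) (eqmod_sym tail).
Qed.

Lemma qpoch_inv_esymq_alt m : (1 <= m <= n)%N ->
  eqmodq (\sum_(m <= r < n.+1) (-1) ^+ (r - m) *
            (qpoch_inv r * esymq r (r - m) - qpoch_inv r.-1 * esymq r.-1 (r - m)))
         ('X^m * \prod_(m.+1 <= i < n.+1) (1 - 'X^i)).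
Proof.
move=> /andP [m_gt0 mn].
apply: (eqmod_trans (b := (\sum_(0 <= j < n.+1 - m) (-1) ^+ j * ('X^(tri j) * qpoch_inv j))
                          * 'X^m * qpoch_inv m)).
  rewrite -{1}[m]add0n big_addn -mulrA big_distrl /=.
  apply: eqmod_sum => j _; rewrite addnK -mulrA; apply: eqmodMl.
  have := @qpoch_inv_esymq_diff (j + m) m; rewrite addnK; apply.
  by rewrite m_gt0 leq_addl.
apply: (eqmod_trans (eqmodMr _ (sum_tri_qpoch_inv_mulX mn))).
rewrite (qpoch_cat mn) -[X in eqmodq _ X]mulr1.
have -> : qpoch m * \prod_(m.+1 <= i < n.+1) (1 - 'X^i) * 'X^m * qpoch_inv m
    = ('X^m * \prod_(m.+1 <= i < n.+1) (1 - 'X^i)) * (qpoch m * qpoch_inv m) by ring.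
exact/eqmodMl/qpochK.
Qed.
End TruncatedIdentities.

Definition esym_gf (r : nat) : {poly {poly int}} := \prod_(1 <= i < r.+1) (1 + 'X * ('X^i)%:P).

Lemma coef_esym_gf r j : (esym_gf r)`_j = esymq r j.
Proof.
elim: r j => [|r ih] j; first by rewrite /esym_gf big_geq // coef1.
rewrite /esym_gf big_nat_recr //= -/(esym_gf r) mulrDr mulr1 coefD ih mulrA coefMC coefMX.
by case: j => [|j] /=; rewrite ?mul0r ?addr0 // ih mulrC.
Qed.

Section BivariateSeries.
Variable n : nat.
Local Notation eqmodq := (@eqmod {poly int} 'X^(n.+1)).
Local Notation qpoch_inv := (qpoch_inv n).
Local Notation qgeom := (qgeom n).

(* The coefficient of y^j q^N in [part_gf r] counts, with weight binomial(nu_d, j),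
   the partitions of N <= n whose largest part is at most r. *)
Definition part_gf (r : nat) : {poly {poly int}} :=
  \prod_(1 <= i < r.+1) (1 + ('X + 1) * (qgeom i)%:P).

Lemma part_gf_trunc r : eqmod ('X^(n.+1))%:P (part_gf r) ((qpoch_inv r)%:P * esym_gf r).
Proof.
rewrite /part_gf /qpoch_inv /esym_gf rmorph_prod -big_split /=.
rewrite big_nat_cond [X in eqmod _ _ X]big_nat_cond.
apply: eqmod_prod => i /andP [/andP [i_gt0 _] _].
have [c ec] := qgeom_mulX n i_gt0; exists (- ('X * c%:P)).
rewrite (_ : _ * - _ = - ('X * ('X^(n.+1) * c)%:P)); last by rewrite polyCM; ring.
by rewrite -ec !(rmorphB, rmorphD, rmorphM, rmorph1) /=; ring.
Qed.

Lemma coef_part_gf_diff r j : (0 < r)%N ->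
  eqmodq ((part_gf r - part_gf r.-1)`_j)
         (qpoch_inv r * esymq r j - qpoch_inv r.-1 * esymq r.-1 j).
Proof.
move=> r_gt0; rewrite coefB -!coef_esym_gf -!coefCM.
by apply: eqmodB; apply: eqmod_coef; apply: part_gf_trunc.
Qed.

Lemma coef_part_gf_alt m : (1 <= m <= n)%N ->
  (\sum_(m <= r < n.+1) (-1) ^+ (r - m) * (part_gf r - part_gf r.-1)`_(r - m))`_n =
  ('X^m * \prod_(m.+1 <= i < n.+1) (1 - 'X^i))`_n.
Proof.
move=> mn; apply: eqmod_Xn_coef; apply: eqmod_trans (qpoch_inv_esymq_alt mn).
rewrite big_nat_cond [X in eqmodq _ X]big_nat_cond.
apply: eqmod_sum => r /andP [/andP [mr _] _]; apply: eqmodMl; apply: coef_part_gf_diff.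
by case/andP: mn => m_gt0 _; apply: leq_trans mr.
Qed.
End BivariateSeries.

Definition prefix_sum (V : nmodType) (f : nat -> V) (x : nat) : V := \sum_(1 <= i < x.+1) f i.

Section BinomialSums.
Variable V : comNzRingType.

Lemma sum_binomial_rev (G : nat -> V) N L K : (N <= L < K)%N ->
  \sum_(0 <= j < N.+1) (-1) ^+ j * 'C(N, j)%:R * G (L - j)%N =
  \sum_(0 <= m < K) (m <= L)%N%:R * ((-1) ^+ (L - m) * 'C(N, L - m)%:R) * G m.
Proof.
case/andP=> NL LK; rewrite [RHS](big_cat_nat _ (n := L.+1)) //=.
rewrite [X in _ = _ + X]big1_seq ?addr0 => [|m /andP [_]]; last first.
  by rewrite mem_index_iota => /andP [Lm _]; rewrite leqNgt Lm !mul0r.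
rewrite [RHS]big_nat_rev /= [RHS](big_cat_nat _ (n := N.+1)) //=.
rewrite [X in _ = _ + X]big1_seq ?addr0 => [|j /andP [_]]; last first.
  by rewrite mem_index_iota => /andP [Nj jL]; rewrite add0n subSS subKn ?bin_small ?mulr0 ?mul0r.
apply: eq_big_nat => j /andP [_ jN]; rewrite add0n subSS leq_subr mul1r subKn //.
exact: leq_trans NL.
Qed.

Lemma sum_binS_alt (G : nat -> V) N :
  \sum_(0 <= j < N.+2) (-1) ^+ j * 'C(N.+1, j)%:R * G j =
  \sum_(0 <= j < N.+1) (-1) ^+ j * 'C(N, j)%:R * (G j - G j.+1).
Proof.
rewrite big_nat_recl // [in RHS]big_nat_recl // bin0 expr0 !mul1r.
have -> : \sum_(0 <= j < N.+1) (-1) ^+ j.+1 * 'C(N.+1, j.+1)%:R * G j.+1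
    = \sum_(0 <= j < N.+1) (-1) ^+ j.+1 * 'C(N, j.+1)%:R * G j.+1
      - \sum_(0 <= j < N.+1) (-1) ^+ j * 'C(N, j)%:R * G j.+1.
  by rewrite -sumrB; apply: eq_bigr => j _; rewrite binS natrD exprS; ring.
rewrite big_nat_recr //= bin_small // mulr0 mul0r addr0.
rewrite [X in _ - X]big_nat_recl // bin0 expr0 !mul1r.
under [in RHS]eq_bigr do rewrite mulrBr.
by rewrite sumrB; ring.
Qed.

Lemma sum_binomial_prefix (f : nat -> V) N L : (0 < N <= L)%N ->
  \sum_(0 <= j < N) (-1) ^+ j * 'C(N.-1, j)%:R * f (L - j)%N =
  \sum_(0 <= j < N.+1) (-1) ^+ j * 'C(N, j)%:R * prefix_sum f (L - j).
Proof.
case: N => // N /andP [_ NL]; rewrite sum_binS_alt; apply: eq_big_nat => j /andP [_ jN].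
have Lj : (0 < L - j)%N by rewrite subn_gt0 (leq_trans jN).
have -> : prefix_sum f (L - j) = prefix_sum f (L - j.+1) + f (L - j)%N.
  by rewrite /prefix_sum subnS prednK // big_nat_recr.
by rewrite addrAC subrr add0r.
Qed.
End BinomialSums.

Lemma sum_fibers (V : nmodType) (I : finType) (P : pred I) (g : I -> nat) K (F : I -> nat -> V) :
  (forall i, P i -> g i < K)%N ->
  \sum_(i | P i) F i (g i) = \sum_(0 <= r < K) \sum_(i | P i && (g i == r)) F i r.
Proof.
move=> gK; rewrite big_mkord (exchange_big_dep P) /=; last by move=> r i _ /andP [].
apply: eq_bigr => i Pi; rewrite (big_pred1 (Ordinal (gK i Pi))) // => r /=.
by rewrite Pi /= eq_sym -(inj_eq val_inj).
Qed.

Lemma coef_signM (R : nzRingType) (p : {poly R}) k i : ((-1) ^+ k * p)`_i = (-1) ^+ k * p`_i.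
Proof. by rewrite -coefCM rmorphXn rmorphN1. Qed.

Lemma prod_natr_mul (R : comNzRingType) (I : finType) (a : pred I) (g : I -> R) :
  \prod_i ((a i)%:R * g i) = ([forall i, a i])%:R * \prod_i g i.
Proof.
rewrite big_split /=; congr (_ * _).
case: (boolP [forall i, a i]) => [/forallP a_all | /forallPn [i /negbTE ai]].
  by rewrite big1 // => i _; rewrite a_all.
by rewrite (bigD1 i) //= ai mul0r.
Qed.

Lemma coef_X1n (R : nzRingType) (N j : nat) : ((('X + 1) ^+ N : {poly R})`_j) = 'C(N, j)%:R.
Proof.
rewrite exprD1n coef_sum; under eq_bigr do rewrite coefMn coefXn.
case: (ltnP j N.+1) => [jN|Nj]; last first.
  by rewrite bin_small // big1 // => i _; rewrite gtn_eqF ?mul0rn // (leq_trans (ltn_ord i)).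
rewrite (bigD1 (Ordinal jN)) //= eqxx big1 ?addr0 // => i /negbTE ij.
by rewrite (_ : (j == i) = false) ?mul0rn //; apply: contraFF ij => /eqP ji; apply/eqP/val_inj.
Qed.

(** * Partitions as multiplicity functions *)

Section MultiplicityFunctions.
Variables (n : nat) (mu : mult_fun n).

Definition psize : nat := (\sum_(i < n.+1) i * mu i)%N.

Lemma is_partitionE : is_partition mu = (mu ord0 == 0%N :> nat) && (psize == n).
Proof. by []. Qed.

Lemma ndistinctE : ndistinct mu = (\sum_(i < n.+1) (0 < mu i))%N.
Proof. by rewrite /ndistinct -sum1_card big_mkcond /=; apply: eq_bigr => i _; rewrite inE. Qed.

Lemma support_gt0 : (0 < psize)%N -> exists i : 'I_n.+1, (0 < mu i)%N.
Proof.
case: (pickP (fun i : 'I_n.+1 => (0 < mu i)%N)) => [i mu_i|no_part]; first by exists i.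
by rewrite /psize big1 // => i _; move: (no_part i); rewrite lt0n => /negbFE /eqP ->; rewrite muln0.
Qed.

Lemma lpart_ltn : (lpart mu < n.+1)%N.
Proof. by rewrite ltnS; apply/bigmax_leqP => i _; rewrite -ltnS. Qed.

Lemma leq_lpart (i : 'I_n.+1) : (0 < mu i)%N -> (i <= lpart mu)%N.
Proof. exact: (leq_bigmax_cond (F := fun i : 'I_n.+1 => i : nat)). Qed.

Lemma spart_ltn : (spart mu < n.+1)%N.
Proof.
rewrite ltnS /spart; apply: (big_ind (fun x => x <= n)%N) => // [x y xn _|i _].
  exact: leq_trans (geq_minl _ _) xn.
by rewrite -ltnS.
Qed.

Lemma spart_leq (i : 'I_n.+1) : (0 < mu i)%N -> (spart mu <= i)%N.
Proof.
move=> mu_i; rewrite /spart; have : i \in index_enum 'I_n.+1 by rewrite mem_index_enum.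
elim: (index_enum _) => // a s ih; rewrite inE big_cons => /orP [/eqP <-|i_s].
  by rewrite mu_i geq_minl.
by case: ifP => _; [apply: leq_trans (geq_minr _ _) (ih i_s) | apply: ih].
Qed.

Lemma spart_geq a : (a <= n)%N ->
  (forall i : 'I_n.+1, (0 < mu i)%N -> (a <= i)%N) -> (a <= spart mu)%N.
Proof. by move=> an h; apply: (big_ind (fun x => a <= x)%N) => // x y; rewrite leq_min => ->. Qed.

Lemma lpart_eqE r : (0 < r <= n)%N ->
  (lpart mu == r) = (0 < mu (inord r))%N && [forall i : 'I_n.+1, (r < i)%N ==> (mu i == 0%N :> nat)].
Proof.
case/andP=> r_gt0 rn; have rK : (inord r : 'I_n.+1) = r :> nat by rewrite inordK.
apply/eqP/idP => [lr|/andP [mu_r /forallP mu_gt]].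
  have above (i : 'I_n.+1) : (r < i)%N -> (mu i == 0%N :> nat).
    by move=> ri; rewrite -leqn0 leqNgt; apply: contraTN ri => /leq_lpart; rewrite lr -leqNgt.
  rewrite (introT forallP (fun i => introT implyP (above i))) andbT lt0n.
  apply: contraTneq r_gt0 => mu_r0; suff : (lpart mu <= r.-1)%N by rewrite lr; lia.
  apply/bigmax_leqP => i mu_i; have : (i <= r)%N by rewrite leqNgt; apply: contraTN mu_i => /above /eqP ->.
  suff : (i : nat) != r by lia.
  by apply: contraTneq mu_i => ir; rewrite (_ : i = inord r) ?mu_r0 //; apply: val_inj; rewrite /= rK.
apply/anti_leq/andP; split; last by rewrite -[X in (X <= _)%N]rK leq_lpart.
apply/bigmax_leqP => i mu_i; rewrite leqNgt; apply: contraTN mu_i => ri.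
by rewrite lt0n negbK (implyP (mu_gt i) ri).
Qed.

Lemma spart_eqE m : (m <= n)%N -> (exists i : 'I_n.+1, 0 < mu i)%N ->
  (spart mu == m) = (0 < mu (inord m))%N && [forall i : 'I_n.+1, (i < m)%N ==> (mu i == 0%N :> nat)].
Proof.
move=> mn [j mu_j]; have mK : (inord m : 'I_n.+1) = m :> nat by rewrite inordK.
apply/eqP/idP => [sm|/andP [mu_m /forallP mu_lt]].
  have below (i : 'I_n.+1) : (i < m)%N -> (mu i == 0%N :> nat).
    by move=> im; rewrite -leqn0 leqNgt; apply: contraTN im => /spart_leq; rewrite sm -leqNgt.
  rewrite (introT forallP (fun i => introT implyP (below i))) andbT lt0n.
  apply/negP => /eqP mu_m0.
  have above (i : 'I_n.+1) : (0 < mu i)%N -> (m < i)%N.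
    move=> mu_i; rewrite ltn_neqAle; apply/andP; split.
      by apply: contraTneq mu_i => mi; rewrite (_ : i = inord m) ?mu_m0 //; apply: val_inj; rewrite /= mK.
    by rewrite leqNgt; apply: contraTN mu_i => /below /eqP ->.
  by have := spart_geq (leq_trans (above j mu_j) (leq_ord j)) above; rewrite sm ltnn.
apply/anti_leq/andP; split; first by rewrite -[X in (_ <= X)%N]mK spart_leq.
apply: spart_geq => // i mu_i; rewrite leqNgt; apply: contraTN mu_i => im.
by rewrite lt0n negbK (implyP (mu_lt i) im).
Qed.
End MultiplicityFunctions.

Section Partitions.
Variables (n : nat) (mu : mult_fun n).
Hypotheses (n_gt0 : (0 < n)%N) (mu_part : is_partition mu).

Lemma partition_mult0 : (mu ord0 == 0%N :> nat). Proof. by case/andP: mu_part. Qed.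

Lemma pos_part (i : 'I_n.+1) : (0 < mu i)%N -> (0 < i)%N.
Proof.
move=> mu_i; rewrite lt0n; apply: contraTneq mu_i => i0.
by rewrite (_ : i = ord0) ?lt0n ?negbK ?partition_mult0 //; apply: val_inj.
Qed.

Lemma support_part : exists i : 'I_n.+1, (0 < mu i)%N.
Proof. by apply: support_gt0; move: mu_part; rewrite is_partitionE => /andP [_ /eqP ->]. Qed.

Lemma lpart_gt0 : (0 < lpart mu)%N.
Proof. by have [i mu_i] := support_part; apply: leq_trans (pos_part mu_i) (leq_lpart mu_i). Qed.

Lemma ndistinct_gt0 : (0 < ndistinct mu)%N.
Proof. by have [i mu_i] := support_part; apply/card_gt0P; exists i; rewrite inE. Qed.

Lemma ndistinct_leq_lpart : (ndistinct mu <= lpart mu)%N.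
Proof.
rewrite ndistinctE; apply: (@leq_trans (\sum_(i < n.+1) (0 < i <= lpart mu))%N).
  apply: leq_sum => i _; case mu_i: (0 < mu i)%N => //.
  by rewrite (pos_part mu_i) (leq_lpart mu_i).
rewrite -(big_mkord xpredT (fun i => (0 < i <= lpart mu : nat)%N)).
rewrite (big_cat_nat _ (n := (lpart mu).+1)) ?lpart_ltn //= [X in (_ + X)%N]big1_seq ?addn0.
  rewrite big_ltn // add0n (eq_big_nat _ _ (F2 := fun => 1%N)) => [|i /andP [i0 iL]].
    by rewrite sum_nat_const_nat muln1 subn1.
  by rewrite i0 -ltnS iL.
by move=> i /andP [_]; rewrite mem_index_iota => /andP [Li _]; rewrite (leqNgt i) Li andbF.
Qed.
End Partitions.

Section SinglePartSize.
Variable n : nat.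

(* The partition (d, d, ..., d) of n, meaningful when d divides n. *)
Definition single_part (d : nat) : mult_fun n :=
  [ffun i : 'I_n.+1 => if (i : nat) == d then inord (n %/ d)%N else ord0].

Lemma psize_supported (mu : mult_fun n) (r : 'I_n.+1) :
  (forall i, i != r -> mu i = 0%N :> nat) -> psize mu = (r * mu r)%N.
Proof. by move=> mu_r; rewrite /psize (bigD1 r) //= big1 ?addn0 // => i /mu_r ->; rewrite muln0. Qed.

Lemma single_partE (mu : mult_fun n) r : (0 < r <= n)%N ->
  [&& is_partition mu, (ndistinct mu < 2)%N & lpart mu == r] = (r %| n)%N && (mu == single_part r).
Proof.
move=> rn'; have /andP [r_gt0 rn] := rn'; have rK : (inord r : 'I_n.+1) = r :> nat by rewrite inordK.
have single_rE (i : 'I_n.+1) : (i == inord r) = ((i : nat) == r).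
  by rewrite -(inj_eq val_inj) /= rK.
apply/and3P/andP => [[mu_part nd_lt2 /eqP lr] | [rn_dvd /eqP {mu}->]].
  have /andP [mu_r _] : (0 < mu (inord r))%N && [forall i : 'I_n.+1, (r < i)%N ==> (mu i == 0%N :> nat)].
    by rewrite -lpart_eqE // lr.
  have mu_supp i : i != inord r -> mu i = 0%N :> nat.
    move=> ir; apply/eqP; rewrite -leqn0 leqNgt; apply: contra ir => mu_i.
    by apply/eqP; apply: (card_le1_eqP nd_lt2); rewrite inE.
  move: mu_part; rewrite is_partitionE (psize_supported mu_supp) rK => /andP [_ /eqP rmu].
  have rn_dvd : (r %| n)%N by rewrite -rmu dvdn_mulr.
  split=> //; apply/eqP/ffunP => i; rewrite ffunE; apply: val_inj.
  case: ifP => [/eqP ir | /negbT ir]; last by rewrite /= mu_supp // single_rE.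
  have -> : i = inord r by apply: val_inj; rewrite /= rK.
  by rewrite /= inordK ?ltnS ?leq_div // -[in RHS]rmu mulKn.
set mu := single_part r.
have mu_r : mu (inord r) = (n %/ r)%N :> nat by rewrite ffunE rK eqxx inordK // ltnS leq_div.
have mu_supp i : i != inord r -> mu i = 0%N :> nat by rewrite ffunE single_rE => /negbTE ->.
split.
- rewrite is_partitionE (psize_supported mu_supp) rK mu_r mulnC divnK // eqxx andbT.
  by rewrite mu_supp // single_rE eq_sym -lt0n.
- have supp k : (0 < mu k)%N -> k = inord r.
    by move=> mu_k; apply/eqP; apply: contraTT mu_k => /mu_supp ->.
  by apply/card_le1_eqP => i j; rewrite !inE => /supp -> /supp ->.
rewrite lpart_eqE // mu_r divn_gt0 // (dvdn_leq _ rn_dvd) ?(leq_trans r_gt0) //=.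
by apply/forallP => i; apply/implyP => ri; rewrite mu_supp // single_rE gtn_eqF.
Qed.
End SinglePartSize.

(** * Generating functions by largest and by smallest part *)

Section LargestPart.
Variable n : nat.

(* Admissible multiplicities t of the part size i in a partition with largest part r. *)
Definition lpart_slot (r i t : nat) : bool := if t is 0 then i != r else (0 < i <= r)%N.

Definition lpart_weight (r i t : nat) : {poly {poly int}} :=
  (lpart_slot r i t)%:R * (('X + 1) ^+ (0 < t)%N * ('X^(i * t))%:P).

Lemma sum_lpart_weight r i : \sum_(t < n.+1) lpart_weight r i t =
  (i != r)%:R + (0 < i <= r)%N%:R * (('X + 1) * (qgeom n i)%:P).
Proof.
rewrite big_ord_recl /lpart_weight /= muln0 expr0 !mulr1; congr (_ + _).
rewrite /qgeom rmorph_sum -!big_distrr /= big_add1 /= big_mkord.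
by congr (_ * (_ * _)); apply: eq_bigr => t _; rewrite expr1.
Qed.

Lemma prod_sum_lpart_weight r : (0 < r <= n)%N ->
  \prod_(i < n.+1) \sum_(t < n.+1) lpart_weight r i t = part_gf n r - part_gf n r.-1.
Proof.
case/andP=> r_gt0 rn; under eq_bigr do rewrite sum_lpart_weight.
rewrite -(big_mkord xpredT (fun i => (i != r)%:R + (0 < i <= r)%N%:R * (('X + 1) * (qgeom n i)%:P))).
rewrite big_ltn // ltnn /= mul0r addr0 eq_sym (lt0n_neq0 r_gt0) mul1r.
rewrite (big_cat_nat _ (n := r.+1)) //= [X in _ * X]big1_seq; last first.
  move=> i /andP [_]; rewrite mem_index_iota => /andP [ri _].
  by rewrite gtn_eqF // (leqNgt i r) ri andbF mul0r addr0.
rewrite mulr1 big_nat_recr //= eqxx r_gt0 leqnn mul1r add0r.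
rewrite /part_gf -{2}(prednK r_gt0) big_nat_recr //= prednK // mulrDr mulr1 addrAC subrr add0r.
congr (_ * _); apply: eq_big_nat => i /andP [i_gt0 ir].
by rewrite ltn_eqF // i_gt0 (ltnW ir) mul1r.
Qed.

Lemma prod_lpart_weight r (mu : mult_fun n) :
  \prod_(i < n.+1) lpart_weight r i (mu i) =
  [forall i : 'I_n.+1, lpart_slot r i (mu i)]%:R * (('X + 1) ^+ ndistinct mu * ('X^(psize mu))%:P).
Proof.
rewrite (prod_natr_mul (fun i : 'I_n.+1 => lpart_slot r i (mu i))) big_split /=.
by rewrite prodrXr -ndistinctE -rmorph_prod prodrXr.
Qed.

Lemma lpart_slotE r (mu : mult_fun n) : (0 < r <= n)%N ->
  [forall i : 'I_n.+1, lpart_slot r i (mu i)] = (mu ord0 == 0%N :> nat) && (lpart mu == r).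
Proof.
move=> rn; rewrite lpart_eqE // /lpart_slot.
have rK : (inord r : 'I_n.+1) = r :> nat by case/andP: rn => _ rn; rewrite inordK.
apply/forallP/idP => [slot|/and3P [mu0 mu_r /forallP mu_gt] i].
  have pos (i : 'I_n.+1) : (0 < mu i)%N -> (0 < i <= r)%N.
    by move: (slot i); case: (nat_of_ord (mu i)).
  rewrite -leqn0 leqNgt; apply/and3P; split.
  - by apply/negP => /pos.
  - by move: (slot (inord r)); rewrite lt0n rK eqxx; case: (nat_of_ord _).
  - apply/forallP => i; apply/implyP => ri; rewrite -leqn0 leqNgt.
    by apply/negP => /pos /andP [_]; rewrite leqNgt ri.
case mu_i: (nat_of_ord (mu i)) => [|t].
  by apply: contraTneq mu_r => ir; rewrite (_ : inord r = i) ?mu_i //; apply: val_inj; rewrite /= rK.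
rewrite lt0n; apply/andP; split.
  by apply: contraTneq mu0 => i0; rewrite (_ : ord0 = i) ?mu_i //; apply: val_inj.
by rewrite leqNgt; apply: contraTN (mu_gt i) => ri; rewrite ri /= mu_i.
Qed.

Lemma sum_binomial_lpart r j : (0 < r <= n)%N ->
  \sum_(mu : mult_fun n | is_partition mu && (lpart mu == r)) ('C(ndistinct mu, j))%:R
  = ((part_gf n r - part_gf n r.-1)`_j)`_n :> int.
Proof.
move=> rn; rewrite -prod_sum_lpart_weight // bigA_distr_bigA /= !coef_sum big_mkcond /=.
apply: eq_bigr => mu _; rewrite prod_lpart_weight lpart_slotE // is_partitionE andbAC.
case: ((mu ord0 == 0%N :> nat) && (lpart mu == r)); rewrite ?mul0r ?coef0 //.
by rewrite mul1r coefMC coef_X1n mulr_natl coefMn coefXn eq_sym; case: (_ == _); rewrite /= ?mul0rn.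
Qed.
End LargestPart.

Section SmallestPart.
Variable n : nat.

(* Admissible multiplicities t of the part size i in a partition into distinct parts
   with smallest part m. *)
Definition spart_slot (m i t : nat) : bool := if t is 0 then i != m else (t == 1%N) && (m <= i)%N.

Definition spart_weight (m i t : nat) : {poly int} :=
  ((spart_slot m i t)%:R * (-1) ^+ t)%:P * 'X^(i * t).

Lemma sum_spart_weight m i : (0 < n)%N ->
  \sum_(t < n.+1) spart_weight m i t = (i != m)%:R - (m <= i)%N%:R * 'X^i.
Proof.
case: n => // k _; rewrite !big_ord_recl big1 => [|t _]; last first.
  by rewrite /spart_weight /= mul0r mul0r.
rewrite /spart_weight /spart_slot /= muln0 muln1 expr0 expr1 !mulr1 addr0 mulrN1.
by rewrite polyCN mulNr !polyC_natr.
Qed.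

Lemma prod_sum_spart_weight m : (0 < m <= n)%N ->
  \prod_(i < n.+1) \sum_(t < n.+1) spart_weight m i t
  = - ('X^m * \prod_(m.+1 <= i < n.+1) (1 - 'X^i)).
Proof.
case/andP=> m_gt0 mn; have n_gt0 := leq_trans m_gt0 mn.
rewrite (eq_bigr _ (fun (i : 'I_n.+1) _ => sum_spart_weight m i n_gt0)).
rewrite -(big_mkord xpredT (fun i => (i != m)%:R - (m <= i)%N%:R * 'X^i)).
rewrite (big_cat_nat _ (n := m)) ?(leq_trans mn) //= big1_seq ?mul1r; last first.
  move=> i /andP [_]; rewrite mem_index_iota => /andP [_ im].
  by rewrite ltn_eqF // leqNgt im mul0r subr0.
rewrite big_ltn ?ltnS // eqxx leqnn mul1r sub0r mulNr; congr (- (_ * _)).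
by apply: eq_big_nat => i /andP [mi _]; rewrite gtn_eqF // (ltnW mi) mul1r.
Qed.

Lemma prod_spart_weight m (mu : mult_fun n) :
  \prod_(i < n.+1) spart_weight m i (mu i) =
  ([forall i : 'I_n.+1, spart_slot m i (mu i)]%:R * (-1) ^+ nparts mu)%:P * 'X^(psize mu).
Proof.
rewrite big_split /= -rmorph_prod prodrXr.
by rewrite (prod_natr_mul (fun i : 'I_n.+1 => spart_slot m i (mu i))) prodrXr.
Qed.

Lemma spart_slotE m (mu : mult_fun n) : (0 < m <= n)%N -> psize mu = n ->
  [forall i : 'I_n.+1, spart_slot m i (mu i)] = is_distinct_partition mu && (spart mu == m).
Proof.
case/andP=> m_gt0 mn sz; have mK : (inord m : 'I_n.+1) = m :> nat by rewrite inordK.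
have [|j mu_j] := support_gt0 (mu := mu); first by rewrite sz (leq_trans m_gt0 mn).
rewrite spart_eqE //; last by exists j.
rewrite /is_distinct_partition is_partitionE sz eqxx andbT /spart_slot -!andbA.
apply/forallP/idP => [slot|/and4P [mu0 /forallP mu_le1 mu_m /forallP mu_lt] i].
  have pos (i : 'I_n.+1) : (0 < mu i)%N -> (mu i == 1%N :> nat) && (m <= i)%N.
    by move: (slot i); case: (nat_of_ord (mu i)).
  have low (i : 'I_n.+1) : (i < m)%N -> (mu i == 0%N :> nat).
    by move=> im; rewrite -leqn0 leqNgt; apply/negP => /pos /andP [_]; rewrite leqNgt im.
  apply/and4P; split.
  - exact: low.
  - apply/forallP => i; case: (posnP (mu i)) => [->|/pos /andP [/eqP -> _]] //.
  - by move: (slot (inord m)); rewrite lt0n mK eqxx; case: (nat_of_ord _).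
  - by apply/forallP => i; apply/implyP; apply: low.
case mu_i: (nat_of_ord (mu i)) => [|t].
  by apply: contraTneq mu_m => im; rewrite (_ : inord m = i) ?mu_i //; apply: val_inj; rewrite /= mK.
have := mu_le1 i; rewrite mu_i ltnS leqn0 => /eqP t0; rewrite t0 /= leqNgt.
by apply: contraTN (mu_lt i) => im; rewrite im /= mu_i.
Qed.

Lemma sum_sign_spart m : (0 < m <= n)%N ->
  \sum_(mu : mult_fun n | is_distinct_partition mu && (spart mu == m)) (-1) ^+ (nparts mu).-1
  = ('X^m * \prod_(m.+1 <= i < n.+1) (1 - 'X^i))`_n :> int.
Proof.
move=> mn; rewrite -[RHS]opprK -coefN -prod_sum_spart_weight // bigA_distr_bigA /=.
rewrite coef_sum -sumrN big_mkcond /=; apply: eq_bigr => mu _.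
rewrite prod_spart_weight coefCM coefXn.
have [sz|sz] := eqVneq (psize mu) n; last first.
  by rewrite mulr0 oppr0 /is_distinct_partition is_partitionE (negbTE sz) andbF.
rewrite mulr1 spart_slotE //; case: ifP => [/andP [dist /eqP sm] | _]; last by rewrite mul0r oppr0.
have [|j mu_j] := support_gt0 (mu := mu); first by case/andP: mn; rewrite sz; apply: leq_trans.
have np_gt0 : (0 < nparts mu)%N by rewrite /nparts (bigD1 j) //= addn_gt0 mu_j.
by rewrite mul1r -[in RHS](prednK np_gt0) exprS mulN1r opprK.
Qed.
End SmallestPart.

Section Coefficients.
Variable n : nat.

Definition spart_coef (m : nat) : int :=
  \sum_(mu : mult_fun n | is_distinct_partition mu && (spart mu == m)) (-1) ^+ (nparts mu).-1.

Definition lpart_coef (m : nat) : int :=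
  \sum_(mu : mult_fun n | is_partition mu)
    (m <= lpart mu)%N%:R * ((-1) ^+ (lpart mu - m) * 'C(ndistinct mu, lpart mu - m)%:R).

Lemma lpart_coefE m : (0 < m <= n)%N -> lpart_coef m = spart_coef m.
Proof.
move=> mn; rewrite /spart_coef sum_sign_spart // -coef_part_gf_alt // coef_sum /lpart_coef.
rewrite (sum_fibers (fun mu r => (m <= r)%N%:R * ((-1) ^+ (r - m) * 'C(ndistinct mu, r - m)%:R))
  (fun mu _ => lpart_ltn mu)).
rewrite (big_cat_nat _ (n := m)) //=; last by case/andP: mn => _ /leqW.
rewrite big1_seq ?add0r => [|r /andP [_]]; last first.
  by rewrite mem_index_iota => /andP [_ rm]; rewrite big1 // => mu _; rewrite leqNgt rm mul0r.
apply: eq_big_nat => r /andP [mr rn]; rewrite coef_signM -sum_binomial_lpart; last first.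
  by case/andP: mn => m_gt0 _; rewrite (leq_trans m_gt0 mr) -ltnS.
by rewrite big_distrr /=; apply: eq_bigr => mu _; rewrite mr mul1r.
Qed.
End Coefficients.

Lemma sum_single_part (V : nmodType) n (f : nat -> V) : (0 < n)%N ->
  \sum_(mu : mult_fun n | is_partition mu && ~~ (2 <= ndistinct mu)%N) f (lpart mu)
  = \sum_(1 <= d < n.+1 | (d %| n)%N) f d.
Proof.
move=> n_gt0; rewrite (sum_fibers (fun _ r => f r) (fun mu _ => lpart_ltn mu)) big_ltn //.
rewrite big1 ?add0r => [|mu /andP [/andP [part _] /eqP l0]]; last first.
  by move: (lpart_gt0 n_gt0 part); rewrite l0.
rewrite [RHS]big_mkcond; apply: eq_big_nat => r /andP [r_gt0 rn].
rewrite (eq_bigl (fun mu => (r %| n)%N && (mu == single_part n r))) => [|mu]; last first.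
  by rewrite -single_partE ?r_gt0 // -ltnNge andbA.
by case: (r %| n)%N; rewrite ?big_pred1_eq ?big_pred0.
Qed.

Section Identity.
Variables (V : comNzRingType) (n : nat) (f : nat -> V).
Hypothesis n_gt0 : (0 < n)%N.
Local Notation F := (prefix_sum f).

Lemma sum_distinct_spart_coef :
  \sum_(mu : mult_fun n | is_distinct_partition mu) (-1) ^+ (nparts mu).-1 * F (spart mu)
  = \sum_(0 <= m < n.+1) (spart_coef n m)%:~R * F m.
Proof.
rewrite (sum_fibers (fun mu m => (-1) ^+ (nparts mu).-1 * F m) (fun mu _ => spart_ltn mu)).
apply: eq_bigr => m _; rewrite rmorph_sum big_distrl; apply: eq_bigr => mu _.
by rewrite rmorphXn rmorphN1.
Qed.

Lemma sum_partition_lpart_coef :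
  \sum_(mu : mult_fun n | is_partition mu)
     \sum_(0 <= j < (ndistinct mu).+1) (-1) ^+ j * 'C(ndistinct mu, j)%:R * F (lpart mu - j)%N
  = \sum_(0 <= m < n.+1) (lpart_coef n m)%:~R * F m.
Proof.
under [RHS]eq_bigr do rewrite /lpart_coef rmorph_sum big_distrl.
rewrite [RHS]exchange_big /=; apply: eq_bigr => mu part.
rewrite (sum_binomial_rev _ (K := n.+1)) ?ndistinct_leq_lpart ?lpart_ltn //.
by apply: eq_bigr => m _; rewrite !rmorphM /= rmorphXn rmorphN1 !rmorph_nat.
Qed.

Lemma sum_partition_prefix :
  \sum_(mu : mult_fun n | is_partition mu && (2 <= ndistinct mu)%N)
      \sum_(0 <= j < ndistinct mu) (-1) ^+ j * ('C((ndistinct mu).-1, j))%:R * f (lpart mu - j)%N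
    + \sum_(1 <= d < n.+1 | (d %| n)%N) f d
  = \sum_(mu : mult_fun n | is_partition mu)
     \sum_(0 <= j < (ndistinct mu).+1) (-1) ^+ j * 'C(ndistinct mu, j)%:R * F (lpart mu - j)%N.
Proof.
have ndl (mu : mult_fun n) : is_partition mu -> (0 < ndistinct mu <= lpart mu)%N.
  by move=> part; rewrite ndistinct_gt0 ?ndistinct_leq_lpart.
rewrite -sum_single_part // [RHS](bigID (fun mu => 2 <= ndistinct mu)%N) /=.
congr (_ + _); apply: eq_bigr => mu /andP [part nd]; first exact: sum_binomial_prefix (ndl mu part).
have nd1 : ndistinct mu = 1%N by move: nd (ndistinct_gt0 n_gt0 part); rewrite -ltnNge; lia.
by rewrite -(sum_binomial_prefix _ (ndl mu part)) nd1 big_nat1 subn0 expr0 bin0 !mul1r.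
Qed.

Lemma distinct_partition_identity :
  \sum_(mu : mult_fun n | is_distinct_partition mu)
     (-1) ^+ (nparts mu).-1 * \sum_(1 <= j < (spart mu).+1) f j
  = \sum_(mu : mult_fun n | is_partition mu && (2 <= ndistinct mu)%N)
      \sum_(0 <= j < ndistinct mu) (-1) ^+ j * ('C((ndistinct mu).-1, j))%:R * f (lpart mu - j)%N
    + \sum_(1 <= d < n.+1 | (d %| n)%N) f d.
Proof.
rewrite sum_partition_prefix sum_partition_lpart_coef.
transitivity (\sum_(0 <= m < n.+1) (spart_coef n m)%:~R * F m); first exact: sum_distinct_spart_coef.
apply: eq_big_nat => -[_|m /andP [_ mn]]; first by rewrite /prefix_sum big_geq // !mulr0.
by rewrite lpart_coefE.
Qed.
End Identity.

Unset Implicit Arguments.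
Set Strict Implicit.

Theorem theorem2p6 (R : realType) (n : nat) (k c : R[i]) : (0 < n)%N ->
  \sum_(mu : mult_fun n | is_distinct_partition mu)
     (-1) ^+ (nparts mu).-1 * \sum_(1 <= j < (spart mu).+1) cpow j k * c ^+ j
  = \sum_(mu : mult_fun n | is_partition mu && (2 <= ndistinct mu)%N)
      \sum_(0 <= j < ndistinct mu)
        (-1) ^+ j * ('C((ndistinct mu).-1, j))%:R
          * cpow (lpart mu - j) k * c ^+ (lpart mu - j)
    + sigma_kc k c n.
Proof.
move=> n_gt0; have := distinct_partition_identity (fun j => cpow j k * c ^+ j) n_gt0.
by under [in RHS]eq_bigr do under eq_bigr do rewrite mulrA.
Qed.
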